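(* Let $(X,b)$ be a weighted graph and $V\colon X\to\mathbb R$. If $q_V$ is nonnegative, then for every $h\in C_c(X)$ with $q_V(h)=0$ the set $\{x\in X\mid h(x)\neq0\}$ is a union of connected components of $(X,b)$. In particular, if all connected components of $(X,b)$ are infinite, every such $h$ vanishes identically.
   Context: Weighted graph: $X$ countable, $b\colon X\times X\to[0,\infty)$ with $b(x,x)=0$, $b(x,y)=b(y,x)$, $\sum_y b(x,y)<\infty$ for all $x$. Connected components are equivalence classes of ''connected by a finite path $x_1,\dots,x_n$ with $b(x_i,x_{i+1})>0$''. $C_c(X)$ is the set of finitely supported complex functions on $X$. $q_V(f)=\frac12\sum_{x,y}b(x,y)|f(x)-f(y)|^2+\sum_x|f(x)|^2V(x)$ for $f\in C_c(X)$; $q_V$ is nonnegative if $q_V(f)\ge0$ for all $f\in C_c(X)$. *)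

From HB Require Import structures.
From mathcomp Require Import all_boot all_order all_algebra.
From mathcomp Require Import all_classical all_reals all_analysis.
From mathcomp Require Export complex.
Set Implicit Arguments. Unset Strict Implicit. Unset Printing Implicit Defensive.
Import Order.TTheory GRing.Theory Num.Theory.
Local Open Scope classical_set_scope.
Local Open Scope ring_scope.

Definition weighted_graph (R : realType) (X : countType) (b : X -> X -> R) : Prop :=
  [/\ (forall x, b x x = 0),
      (forall x y, b x y = b y x),
      (forall x y, 0 <= b x y) &
      (forall x, (\esum_(y in [set: X]) (b x y)%:E < +oo)%E)].

Definition supp (R : realType) (X : Type) (f : X -> R[i]) : set X :=
  [set x | f x != 0].

Definition Cc (R : realType) (X : Type) (f : X -> R[i]) : Prop :=
  finite_set (supp f).

(* The first (nonnegative) sum is an unordered sum over X*X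
   with values in the extended reals (it is finite by summability of the rows);
   the second is a finite sum over the support of f. *)
Definition qV (R : realType) (X : countType) (b : X -> X -> R) (V : X -> R)
    (f : X -> R[i]) : \bar R :=
  ((\esum_(p in [set: X * X]) (2^-1 * b p.1 p.2 * ComplexField.Normc.normc (f p.1 - f p.2) ^+ 2)%:E)
   + (\sum_(x \in supp f) ComplexField.Normc.normc (f x) ^+ 2 * V x)%:E)%E.

Definition qV_nonneg (R : realType) (X : countType) (b : X -> X -> R) (V : X -> R) : Prop :=
  forall f : X -> R[i], Cc f -> (0 <= qV b V f)%E.

Definition gconnected (R : realType) (X : countType) (b : X -> X -> R) (x y : X) : Prop :=
  exists s : seq X, path (fun u v => 0 < b u v) x s /\ last x s = y.

Definition component (R : realType) (X : countType) (b : X -> X -> R) (x : X) : set X :=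
  [set y | gconnected b x y].

Definition union_of_components (R : realType) (X : countType) (b : X -> X -> R)
    (S : set X) : Prop :=
  exists I : set X, S = \bigcup_(x in I) component b x.

(* If h(x) <> 0, b(x,y) > 0 and h(y) = 0, replace h by |h| (which does not
   increase any edge term) and then give y the small value t > 0.  On the edge
   (y, x) this saves t b(y,x) |h(x)|, while the other edges at y cost at most
   t^2 deg(y) and the potential costs t^2 V(y).  As q_V(h) = 0, the new function
   has q_V < 0 for small t, contradicting nonnegativity.  So supp h is closed
   under edges, hence a union of components, none of which can be infinite since
   supp h is finite. *)

From mathcomp Require Import all_boot all_order all_algebra.
From mathcomp Require Import all_classical all_reals all_analysis.
From mathcomp Require Import complex.
From mathcomp Require Import lra.
Import Order.TTheory GRing.Theory Num.Theory.
Local Open Scope classical_set_scope.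
Local Open Scope ring_scope.

Local Notation normc := ComplexField.Normc.normc.

Section ComplexModulus.
Context {R : realType}.
Implicit Types (r : R) (z u v : R[i]).
Local Open Scope complex_scope.

Lemma normc_ge0 z : 0 <= normc z.
Proof. by case: z => a c; rewrite /= sqrtr_ge0. Qed.

Lemma normc_eq0 z : (normc z == 0) = (z == 0).
Proof.
apply/eqP/eqP => [/ComplexField.Normc.eq0_normc //|->].
exact: ComplexField.Normc.normc0.
Qed.

Lemma real_complex_eq0 r : (r%:C == 0) = (r == 0).
Proof. by apply/eqP/eqP => [[]|->]. Qed.

Lemma sqr_normc_real r : normc r%:C ^+ 2 = r ^+ 2.
Proof. by rewrite /= expr0n /= addr0 sqrtr_sqr real_normK ?num_real. Qed.

Lemma sqr_normcB_ge u v : (normc u - normc v) ^+ 2 <= normc (u - v) ^+ 2.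
Proof.
have le_u : normc u <= normc (u - v) + normc v.
  by rewrite -[X in normc X <= _](subrK v) le_normcD.
have le_v : normc v <= normc (u - v) + normc u.
  by rewrite -(normcN (u - v)) opprB -[X in normc X <= _](subrK u) le_normcD.
have := normc_ge0 (u - v); nra.
Qed.

End ComplexModulus.

Section ExtendedSums.
Context {R : realType}.
Local Open Scope ereal_scope.

Lemma esumZl_le (T : choiceType) (S : set T) (a : T -> R) (k : R) :
  (0 <= k)%R -> (forall i, 0 <= a i)%R ->
  \esum_(i in S) (k * a i)%:E <= k%:E * \esum_(i in S) (a i)%:E.
Proof.
move=> k0 a0; apply: ge_ereal_sup => _ [A [finA AS] <-].
rewrite fsumEFin // -mulr_fsumr EFinM -fsumEFin //.
by apply: lee_wpmul2l; [rewrite lee_fin | apply: ereal_sup_ubound; exists A].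
Qed.

Lemma esum_setT_inj (T U : choiceType) (g : T -> U) (F : U -> \bar R) :
  injective g -> (forall u, ~ range g u -> F u = 0) ->
  \esum_(u in [set: U]) F u = \esum_(t in [set: T]) F (g t).
Proof.
move=> g_inj F0; rewrite -(esum_image [set: T] g F (in2W g_inj)).
rewrite [RHS]esum_mkcond; apply: eq_esum => u _.
by case: ifPn => // /negP; rewrite inE => /F0.
Qed.

End ExtendedSums.

Section ZeroEnergy.
Context {R : realType} {X : countType} {b : X -> X -> R}.
Hypotheses (b_sym : forall x y, b x y = b y x) (b_ge0 : forall x y, 0 <= b x y).
Hypothesis b_row_fin : forall x, (\esum_(y in [set: X]) (b x y)%:E < +oo)%E.
Local Open Scope complex_scope.

Definition edge_energy (f : X -> R[i]) (p : X * X) : R :=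
  2^-1 * b p.1 p.2 * normc (f p.1 - f p.2) ^+ 2.

Definition energy (f : X -> R[i]) : \bar R :=
  \esum_(p in [set: X * X]) (edge_energy f p)%:E.

Definition potential (V : X -> R) (f : X -> R[i]) : R :=
  \sum_(x \in supp f) normc (f x) ^+ 2 * V x.

Lemma qVE V f : qV b V f = (energy f + (potential V f)%:E)%E.
Proof. by []. Qed.

Lemma edge_energy_ge0 f p : 0 <= edge_energy f p.
Proof. by rewrite /edge_energy mulr_ge0 ?sqr_ge0 // mulr_ge0. Qed.

Definition degree (y : X) : R := fine (\esum_(z in [set: X]) (b y z)%:E).

Lemma degreeE y : \esum_(z in [set: X]) (b y z)%:E = (degree y)%:E.
Proof. by rewrite fineK // ge0_fin_numE ?esum_ge0 // => z _; rewrite lee_fin. Qed.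

Lemma esum_edges_from_le y k : 0 <= k ->
  (\esum_(p in [set: X * X]) (if p.1 == y then k * b p.1 p.2 else 0)%:E
    <= (k * degree y)%:E)%E.
Proof.
move=> k_ge0; rewrite (@esum_setT_inj _ _ _ (pair y)); last 2 first.
- by move=> z z' [].
- by case=> z z' /=; case: eqP => // -> []; exists z'.
under eq_esum do rewrite /= eqxx.
by rewrite EFinM -degreeE esumZl_le.
Qed.

Lemma esum_edges_to_le y k : 0 <= k ->
  (\esum_(p in [set: X * X]) (if p.2 == y then k * b p.1 p.2 else 0)%:E
    <= (k * degree y)%:E)%E.
Proof.
move=> k_ge0; rewrite (@esum_setT_inj _ _ _ (fun z => (z, y))); last 2 first.
- by move=> z z' [].
- by case=> z z' /=; case: eqP => // -> []; exists z.
under eq_esum do rewrite /= eqxx b_sym.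
by rewrite EFinM -degreeE esumZl_le.
Qed.

Definition modulus_bump (h : X -> R[i]) (y : X) (t : R) (z : X) : R :=
  if z == y then t else normc (h z).

Section ModulusBump.
Variables (h : X -> R[i]) (y : X) (t : R).
Hypotheses (h_Cc : Cc h) (hy0 : h y = 0) (t_gt0 : 0 < t).
Local Notation f := (fun z => (modulus_bump h y t z)%:C).

Lemma supp_modulus_bump : supp f = y |` supp h.
Proof.
apply/seteqP; split => z; rewrite /supp /modulus_bump /= real_complex_eq0.
  by case: (eqVneq z y) => [->|_]; [left | rewrite normc_eq0; right].
case: (eqVneq z y) => [-> _|zy [/eqP|]]; first by rewrite gt_eqF.
  by rewrite (negbTE zy).
by rewrite normc_eq0.
Qed.

Lemma Cc_modulus_bump : Cc f.
Proof. by rewrite /Cc supp_modulus_bump finite_setU; split; [exact: finite_set1|]. Qed.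

Lemma potential_modulus_bump V : potential V f = potential V h + t ^+ 2 * V y.
Proof.
have y_supp : ~ supp h y by rewrite /supp /= hy0 eqxx.
rewrite /potential supp_modulus_bump fsbigU0 ?finite_set1 //; first last.
  by move=> z [/= ->].
rewrite fsbig_set1 /modulus_bump eqxx sqr_normc_real addrC; congr (_ + _).
apply: eq_fsbigr => z; rewrite inE => hz.
have /negPf -> : z != y by apply: contraPneq y_supp => <-.
by rewrite sqr_normc_real.
Qed.

Lemma edge_energy_modulus_bump_le x p : x != y ->
  edge_energy f p + (if p == (y, x) then t * (b y x * normc (h x)) else 0)
  <= edge_energy h p + ((if p.1 == y then t ^+ 2 / 2 * b p.1 p.2 else 0)
                        + (if p.2 == y then t ^+ 2 / 2 * b p.1 p.2 else 0)).
Proof.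
move=> xy; case: p => z w.
rewrite /edge_energy /modulus_bump xpair_eqE -rmorphB sqr_normc_real /=.
have tbn_ge0 u v : 0 <= t * b u v * normc (h v).
  by rewrite !mulr_ge0 ?normc_ge0 ?(ltW t_gt0).
have := b_ge0 z w.
have [-> {z}|zy] := eqVneq z y; have [-> {w}|wy] := eqVneq w y.
- rewrite [y == x]eq_sym (negbTE xy) /= hy0 subrr; have := sqr_ge0 t; nra.
(* [normc] reaches [R] through several structure paths; generalizing its
   occurrences lets [nra] identify them. *)
- rewrite hy0 sub0r normcN; have [<- /=|_ /=] := eqVneq w x;
    have := tbn_ge0 y w; move: (normc (h w)) => n; nra.
- rewrite hy0 subr0 /= [b z y]b_sym; have := tbn_ge0 y z.
  move: (normc (h z)) => n; nra.
- rewrite /=; have := sqr_normcB_ge (h z) (h w).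
  move: (normc (h z)) (normc (h w)) (normc (h z - h w)) => u v d; nra.
Qed.

Lemma energy_modulus_bump_le x : x != y ->
  (energy f + (t * (b y x * normc (h x)))%:E
    <= energy h + (t ^+ 2 * degree y)%:E)%E.
Proof.
move=> xy; set s := t * _.
pose c p := if p == (y, x) then s else 0.
pose k := t ^+ 2 / 2.
pose d1 (p : X * X) := if p.1 == y then k * b p.1 p.2 else 0.
pose d2 (p : X * X) := if p.2 == y then k * b p.1 p.2 else 0.
have k_ge0 : 0 <= k by rewrite divr_ge0 ?sqr_ge0.
have s_ge0 : 0 <= s by rewrite !mulr_ge0 ?normc_ge0 ?(ltW t_gt0).
have c_ge0 p : (0 <= (c p)%:E)%E by rewrite lee_fin /c; case: ifP.
have d1_ge0 p : (0 <= (d1 p)%:E)%E.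
  by rewrite lee_fin /d1; case: ifP => _ //; exact: mulr_ge0.
have d2_ge0 p : (0 <= (d2 p)%:E)%E.
  by rewrite lee_fin /d2; case: ifP => _ //; exact: mulr_ge0.
have E_ge0 g p : (0 <= (edge_energy g p)%:E)%E by rewrite lee_fin edge_energy_ge0.
have s_le : (s%:E <= \esum_(p in [set: X * X]) (c p)%:E)%E.
  apply: esum_ge; exists [set (y, x)]; first by split; [exact: finite_set1|].
  by rewrite fsbig_set1 /c eqxx.
apply: le_trans (leeD2l _ s_le) _.
rewrite /energy -esumD //.
under eq_esum do rewrite -EFinD.
apply: le_trans (le_esum (b := fun p => (edge_energy h p + (d1 p + d2 p))%:E) _) _.
  by move=> p _; rewrite lee_fin edge_energy_modulus_bump_le.
under eq_esum do rewrite !EFinD.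
rewrite esumD ?esumD // => [|p _]; last exact: adde_ge0.
rewrite leeD2l // [t ^+ 2]splitr mulrDl EFinD.
exact: leeD (esum_edges_from_le y k k_ge0) (esum_edges_to_le y k k_ge0).
Qed.

Lemma qV_modulus_bump_le V x : x != y ->
  (qV b V f + (t * (b y x * normc (h x)))%:E
    <= qV b V h + (t ^+ 2 * (degree y + V y))%:E)%E.
Proof.
move=> xy; rewrite !qVE (potential_modulus_bump V) mulrDr !EFinD addeAC.
by rewrite [X in (_ <= X)%E]addeACA leeD2r // energy_modulus_bump_le.
Qed.

End ModulusBump.

Lemma qV_eq0_nonzero_adjacent V h : qV_nonneg b V -> Cc h -> qV b V h = 0%E ->
  forall x y, h x != 0 -> 0 < b x y -> h y != 0.
Proof.
move=> qV_ge0 h_Cc qVh0 x y hx0 bxy; apply/eqP => hy0.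
have xy : x != y by apply: contraNneq hx0 => ->; rewrite hy0.
set s := b y x * normc (h x); set c := degree y + V y.
have s_gt0 : 0 < s by rewrite /s b_sym mulr_gt0 // lt_def normc_eq0 hx0 normc_ge0.
have c1_gt0 : 0 < `|c| + 1 by rewrite ltr_wpDl.
pose t := s / (`|c| + 1).
have t_gt0 : 0 < t by rewrite divr_gt0.
have tc_lt_s : t * c < s.
  rewrite -[s](mulfVK (lt0r_neq0 c1_gt0)) -/t.
  have := ler_norm c; nra.
have f_Cc := @Cc_modulus_bump h y t h_Cc t_gt0.
have := @qV_modulus_bump_le h y t h_Cc hy0 t_gt0 V x xy.
rewrite qVh0 add0e => /(le_trans (leeDr _ (qV_ge0 _ f_Cc))).
rewrite lee_fin -/s -/c; nra.
Qed.

End ZeroEnergy.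

Section EdgeClosedSets.
Variables (R : realType) (X : countType) (b : X -> X -> R) (S : set X).
Hypothesis S_edge_closed : forall x y, S x -> 0 < b x y -> S y.

Lemma edge_closed_path_last x s :
  S x -> path (fun u v => 0 < b u v) x s -> S (last x s).
Proof.
elim: s x => [|z s IH] x Sx //= /andP[bxz zs].
exact: IH (S_edge_closed _ _ Sx bxz) zs.
Qed.

Lemma edge_closed_component_sub x : S x -> component b x `<=` S.
Proof. by move=> Sx y [s [xs <-]]; exact: edge_closed_path_last. Qed.

Lemma edge_closed_union_of_components : union_of_components b S.
Proof.
exists S; apply/seteqP; split => [x Sx|y [x Sx]]; last exact: edge_closed_component_sub.
by exists x => //; exists [::].
Qed.

End EdgeClosedSets.

Theorem lemma4p4 (R : realType) (X : countType) (b : X -> X -> R) (V : X -> R) :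
  weighted_graph b ->
  qV_nonneg b V ->
  forall h : X -> R[i], Cc h -> qV b V h = 0%E ->
    union_of_components b (supp h) /\
    ((forall x : X, infinite_set (component b x)) -> forall x : X, h x = 0).
Proof.
move=> [_ b_sym b_ge0 b_row_fin] qV_ge0 h h_Cc qVh0.
have supp_closed :=
  qV_eq0_nonzero_adjacent b_sym b_ge0 b_row_fin V h qV_ge0 h_Cc qVh0.
split; first exact: edge_closed_union_of_components supp_closed.
move=> comp_inf x; have [//|hx0] := eqVneq (h x) 0; case: (comp_inf x).
by apply: sub_finite_set h_Cc; exact: edge_closed_component_sub.
Qed.
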